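(* Let $G$ be a graph on $n$ vertices with $\mu(G)<\delta(G)$. Then $n\ge 2\delta(G)-3$. If moreover $n=2\delta(G)-3$, then $\mu(G)=\delta(G)-1$.
   Context: All graphs are finite and simple; $\delta(G)$ is the minimum degree. For a graph $G=(V,E)$ on $n$ vertices, a fractional vertex cover is a function $f:V\to[0,\infty)$ with $f(u)+f(v)\ge 1$ for every edge $uv\in E$; $\tau^*(G)$ denotes the minimum of $\sum_{v\in V}f(v)$ over all fractional vertex covers. For $E'\subseteq E$ let $G-E'=(V,E\setminus E')$. Define $\mu(G)=\min\{|E'| : E'\subseteq E,\ \tau^*(G-E')<n/2\}$. *)

From mathcomp Require Import all_boot all_order all_algebra.
From mathcomp Require Import classical_sets reals.
Set Implicit Arguments. Unset Strict Implicit. Unset Printing Implicit Defensive.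
Import Order.TTheory GRing.Theory Num.Theory.

(* A finite simple graph is a symmetric irreflexive relation e on a finType T
   (hypotheses are in the theorem).  Edges are unordered pairs {u,v}. *)
Definition edges (T : finType) (e : rel T) : {set {set T}} :=
  [set [set p.1; p.2] | p in [set p : T * T | e p.1 p.2]].

Definition del_edges (T : finType) (e : rel T) (E' : {set {set T}}) : rel T :=
  fun u v => e u v && ([set u; v] \notin E').

Definition degree (T : finType) (e : rel T) (v : T) : nat := #|[set u | e v u]|.

(* minimum degree (equals 0 for the empty vertex set, which never matters) *)
Definition min_degree (T : finType) (e : rel T) : nat :=
  \big[minn/#|T|]_(v : T) degree e v.

Local Open Scope ring_scope.

Definition frac_cover (R : realType) (T : finType) (e : rel T) (f : T -> R) :=
  (forall v, 0 <= f v) /\ (forall u v, e u v -> 1 <= f u + f v).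

Definition tau_star (R : realType) (T : finType) (e : rel T) : R :=
  inf [set s : R | exists f : T -> R, frac_cover e f /\ s = \sum_(v : T) f v].

Definition is_mu (R : realType) (T : finType) (e : rel T) (m : nat) : Prop :=
  (exists E' : {set {set T}}, E' \subset edges e /\ #|E'| = m /\
      tau_star R (del_edges e E') < (#|T|%:R / 2)) /\
  (forall E' : {set {set T}}, E' \subset edges e ->
      tau_star R (del_edges e E') < (#|T|%:R / 2) -> (m <= #|E'|)%N).

(* Fix E' with |E'| = m < d and tau*(G - E') < n/2, and a fractional cover f of
   G - E' of weight < n/2.  As the values f v - 1/2 have negative sum, some level
   c > 0 has more vertices in I = {f <= 1/2 - c} than in N = {f >= 1/2 + c}.  An
   edge of G from I to a vertex outside N is not covered by f, so it lies in E'.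
   Every v in I has at least x = d - |N| such neighbours, at most |I| - 1 of them
   in I, hence at least x - |I| + 1 outside I and N.  Counting E' from I gives
   |I| (x + (x - |I| + 1)) <= 2m, counting vertices gives
   n >= |I| + |N| + (x - |I| + 1), and with |N| < |I| and m < d these force
   n >= 2d - 3, with equality only when m = d - 1. *)

(* Loaded before finset so that finset's subsetP, set0 and setT take precedence. *)
From mathcomp Require Import classical_sets reals.
From mathcomp Require Import all_boot all_order all_algebra.
From mathcomp Require Import zify lra.
Set Implicit Arguments. Unset Strict Implicit. Unset Printing Implicit Defensive.
Import Order.TTheory GRing.Theory Num.Theory.

Lemma cut_bound_arith (n d m k s : nat) : s < k -> k + s + (d - s - k.-1) <= n ->
  k * ((d - s) + (d - s - k.-1)) <= 2 * m -> m < d ->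
  2 * d <= n + 3 /\ (n + 3 = 2 * d -> m = d.-1).
Proof.
move=> lt_sk le_n le_m lt_md.
have [|lt_sd] := leqP d s; first by lia.
have [le_kx|lt_xk] := leqP k (d - s); first by nia.
have excess0 : d - s - k.-1 = 0 by lia.
rewrite excess0 addn0 in le_m le_n.
have [|lt2x] := leqP (d - s) 2; first by nia.
have : 3 * k + 2 * (d - s) <= k * (d - s) + 6. (* (k - 2) (d - s - 3) >= 0 *)
  have -> : k = (k - 3) + 3 by lia.
  have -> : d - s = (d - s - 3) + 3 by lia.
  nia.
lia.
Qed.

Lemma card_sepD1 (T : finType) (A : {set T}) (P : pred T) (v : T) : v \in A ->
  #|[set x in A | P x]| = P v + #|[set x in A :\ v | P x]|.
Proof.
move=> vA; rewrite (cardsD1 v) !inE vA /=.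
by congr (_ + _); apply: eq_card => x; rewrite !inE andbA.
Qed.

Lemma card_dep_pairs (T : finType) (A : {set T}) (Q : T -> T -> bool) :
  #|[set p : T * T | (p.1 \in A) && Q p.1 p.2]| = \sum_(x in A) #|[set y | Q x y]|.
Proof.
under eq_bigr do rewrite -sum1dep_card.
by rewrite pair_big_dep sum1dep_card.
Qed.

Lemma set2_eq_pair (T : finType) (x y a b : T) : x != y ->
  [set x; y] = [set a; b] -> (x, y) = (a, b) \/ (x, y) = (b, a).
Proof.
move=> + eq_xy_ab.
have : x \in [set a; b] by rewrite -eq_xy_ab set21.
have : y \in [set a; b] by rewrite -eq_xy_ab set22.
by rewrite !inE => /orP[]/eqP-> /orP[]/eqP->; rewrite ?eqxx //; [right | left].
Qed.

Lemma card_orientations_le (T : finType) (E : {set {set T}}) :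
  #|[set p : T * T | (p.1 != p.2) && ([set p.1; p.2] \in E)]| <= 2 * #|E|.
Proof.
rewrite -sum1dep_card (partition_big (fun p => [set p.1; p.2]) (mem E)) => [|p /andP[] //].
rewrite mulnC -sum_nat_const; apply: leq_sum => eps _.
rewrite sum1dep_card; set fibre := [set x | _].
have [-> | [[a b]]] := set_0Vmem fibre; first by rewrite cards0.
rewrite inE /= => /andP[/andP[neq_ab _] /eqP eq_ab].
apply: leq_trans (_ : #|[set (a, b); (b, a)]| <= 2); last by rewrite cards2 ltnS leq_b1.
apply/subset_leq_card/subsetP => -[x y]; rewrite !inE /= => /andP[/andP[neq_xy _] /eqP eq_xy].
have [[-> ->] | [-> ->]] := set2_eq_pair neq_xy (etrans eq_xy (esym eq_ab)).
  by rewrite eqxx.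
by rewrite eqxx orbT.
Qed.

Lemma min_degree_le (T : finType) (e : rel T) v : min_degree e <= degree e v.
Proof. by rewrite /min_degree -minEnat -leEnat bigmin_le. Qed.

Section Cut.

Variables (T : finType) (e : rel T).
Hypothesis e_irr : irreflexive e.
Variables (E : {set {set T}}) (I N : {set T}).
Hypothesis disj_IN : [disjoint I & N].
Hypothesis cut_I : forall v u, v \in I -> u \notin N -> e v u -> [set v; u] \in E.

Let O := ~: (I :|: N).

Lemma degree_le_cut v : degree e v <= #|N| + #|[set u | (u \notin N) && e v u]|.
Proof.
apply: leq_trans (leq_card_setU N _); apply/subset_leq_card/subsetP => u.
by rewrite !inE; case: (u \in N).
Qed.

Lemma card_cut_nbrs_le v : v \in I ->
  #|[set u | (u \notin N) && e v u]| <= #|I|.-1 + #|[set u in O | e v u]|.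
Proof.
move=> vI; rewrite (cardsD1 v I) vI add1n /=.
apply: leq_trans (leq_card_setU (I :\ v) _); apply/subset_leq_card/subsetP => u.
rewrite !inE => /andP[uN evu]; rewrite evu (negbTE uN) andbT orbF.
case: (u \in I); rewrite /= ?andbT ?andbF ?orbF //.
by apply: contraTneq _ evu => ->; rewrite e_irr.
Qed.

Lemma card_outside_nbrs_le v : #|I| + #|N| + #|[set u in O | e v u]| <= #|T|.
Proof.
rewrite -(cardsC (I :|: N)) cardsU (disjoint_setI0 disj_IN) cards0 subn0 leq_add2l.
by apply/subset_leq_card/subsetP => u; rewrite inE => /andP[].
Qed.

Lemma sum_cut_nbrs_le :
  \sum_(v in I) (#|[set u | (u \notin N) && e v u]| + #|[set u in O | e v u]|) <= 2 * #|E|.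
Proof.
(* P counts the E-edges at their end in I; the preimage of Q counts the edges
   between I and O a second time, at their end in O. *)
pose P := [set p : T * T | (p.1 \in I) && ((p.2 \notin N) && e p.1 p.2)].
pose Q := [set p : T * T | (p.1 \in I) && ((p.2 \in O) && e p.1 p.2)].
have disj_PQ : [disjoint P & swap_pair @^-1: Q].
  rewrite -setI_eq0; apply/eqP/setP => -[x y]; rewrite !inE /=.
  by case: (x \in I); rewrite /= ?andbF.
have sub_PQ : P :|: swap_pair @^-1: Q \subset
    [set p : T * T | (p.1 != p.2) && ([set p.1; p.2] \in E)].
  apply/subsetP => -[x y]; rewrite !inE /= => /orP[/and3P[xI yN exy] | /and3P[yI xO eyx]].
    by rewrite cut_I // andbT; apply: contraTneq exy => ->; rewrite e_irr.
  rewrite setUC cut_I ?andbT //; last by move: xO; rewrite negb_or => /andP[].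
  by apply: contraTneq eyx => ->; rewrite e_irr.
apply: leq_trans (card_orientations_le E).
rewrite big_split /= -!card_dep_pairs -(card_preimset Q (can_inj swap_pairK)).
rewrite -(geq_leqif (leq_card_setU P _)) in disj_PQ.
exact: leq_trans disj_PQ (subset_leq_card sub_PQ).
Qed.

Lemma cut_min_degree_bound : #|N| < #|I| -> #|E| < min_degree e ->
  2 * min_degree e <= #|T| + 3 /\ (#|T| + 3 = 2 * min_degree e -> #|E| = (min_degree e).-1).
Proof.
move=> lt_NI lt_Ed.
have [v0 v0I] : exists v, v \in I by apply/card_gt0P; apply: leq_ltn_trans lt_NI.
apply: (cut_bound_arith lt_NI _ _ lt_Ed).
  have := min_degree_le e v0; have := degree_le_cut v0.
  have := card_cut_nbrs_le v0I; have := card_outside_nbrs_le v0; lia.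
apply: leq_trans sum_cut_nbrs_le; rewrite -sum_nat_const; apply: leq_sum => v vI.
have := min_degree_le e v; have := degree_le_cut v; have := card_cut_nbrs_le vI; lia.
Qed.

End Cut.

Section FractionalCover.

Local Open Scope ring_scope.

Lemma sum_lt0_level (R : realDomainType) (T : finType) (h : T -> R) (A : {set T}) :
  \sum_(x in A) h x < 0 -> exists2 c : R, 0 < c &
    (#|[set x in A | (c <= h x)%R]| < #|[set x in A | (h x <= - c)%R]|)%N.
Proof.
have [N] := ubnP #|A|; elim: N A => // N IH A /ltnSE le_AN sum_lt0.
have [v vA v_min] : exists2 v, v \in A & forall x, x \in A -> h v <= h x.
  have [v0 v0A] : exists v, v \in A.
    by apply/set0Pn; apply: contraTneq sum_lt0 => ->; rewrite big_set0 ltxx.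
  by case: (arg_minP h v0A) => v; exists v.
have hv_lt0 : h v < 0.
  rewrite ltNge; apply: contraTN sum_lt0 => hv_ge0; rewrite -leNgt.
  by apply: sumr_ge0 => x /v_min; apply: le_trans.
pose a := - h v.
have [|le_below_above] := ltnP #|[set x in A | a <= h x]| #|[set x in A | h x <= - a]|.
  by exists a; rewrite // oppr_gt0.
(* Otherwise pair the minimum v with some w at level >= -h v and recurse without them. *)
have [w wA a_le_hw] : exists2 w, w \in A & a <= h w.
  have : (0 < #|[set x in A | (a <= h x)%R]|)%N.
    by apply: leq_trans le_below_above; rewrite (card_sepD1 _ vA) /a opprK lexx.
  by case/card_gt0P => w; rewrite inE => /andP[]; exists w.
have wAv : w \in A :\ v.
  by rewrite !inE wA andbT; apply: contraTneq a_le_hw => ->; rewrite -ltNge /a; lra.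
have card_lt : (#|A :\ v :\ w| < N)%N.
  by apply: leq_trans le_AN; rewrite (cardsD1 v A) vA (cardsD1 w (A :\ v)) wAv.
have sum_lt0' : \sum_(x in A :\ v :\ w) h x < 0.
  by move: sum_lt0; rewrite (big_setD1 v vA) (big_setD1 w wAv) /= /a in a_le_hw *; lra.
have [c c_gt0 lt_c] := IH _ card_lt sum_lt0'.
exists c => //.
have [le_ca|lt_ac] := leP c a; last first.
  suff low0 : [set x in A :\ v :\ w | (h x <= - c)%R] = set0.
    by rewrite low0 cards0 ltn0 in lt_c.
  apply/setP => x; rewrite !inE; apply/negP => /andP[/andP[_ /andP[_ xA]] hx].
  by have := v_min x xA; rewrite /a in lt_ac; lra.
rewrite (card_sepD1 _ vA) (card_sepD1 _ wAv) (card_sepD1 (fun x => h x <= - c) vA).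
rewrite (card_sepD1 (fun x => h x <= - c) wAv) /=.
have [-> -> -> ->] : [/\ (c <= h v) = false, c <= h w, h v <= - c & (h w <= - c) = false].
  rewrite /a in le_ca a_le_hw.
  by split; [apply: lt_geF | | | apply: lt_geF]; lra.
by rewrite /= !add0n !add1n ltnS.
Qed.

Lemma tau_star_lt_cover (R : realType) (T : finType) (e : rel T) (r : R) :
  tau_star R e < r -> exists2 f : T -> R, frac_cover e f & \sum_v f v < r.
Proof.
case/inf_lt => [|_ [f [f_cover ->]] lt_r]; last by exists f.
exists (\sum_(v : T) 1), (fun=> 1); split=> //; split=> // u v _.
by rewrite ler_wpDl.
Qed.

End FractionalCover.

Theorem lemma25 (R : realType) (T : finType) (e : rel T)
  (e_sym : symmetric e) (e_irr : irreflexive e) (m : nat) :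
  is_mu R e m -> (m < min_degree e)%N ->
  (2 * min_degree e <= #|T| + 3)%N /\
  (#|T| + 3 = 2 * min_degree e -> m = (min_degree e).-1)%N.
Proof.
move=> [[E [_ [<- tau_lt]]] _] lt_md.
have [f f_cover sum_lt] := tau_star_lt_cover tau_lt.
pose h v := (f v - 2^-1)%R.
have [|c c_gt0 lt_NI] := @sum_lt0_level R T h setT.
  by rewrite sumrB sumr_const cardsT (eq_bigl xpredT) => [|x]; rewrite ?inE //; lra.
apply: (cut_min_degree_bound e_irr _ _ lt_NI lt_md).
  rewrite -setI_eq0; apply/eqP/setP => x; rewrite !inE /h.
  by apply/negbTE/negP => /andP[]; lra.
move=> v u; rewrite !inE /h => hv hu evu; apply: contraNT hu => vu_notin_E.
by have := f_cover.2 v u; rewrite /del_edges evu vu_notin_E => /(_ isT); lra.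
Qed.
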